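(* Let $E$ be an sc-Banach space, $C$ a partial quadrant in $E$, and $N$ a finite-dimensional linear subspace of $E$ which is in good position to $C$. Then $C\cap N$ is a partial quadrant in $N$.
   Context: An sc-Banach space is a Banach space $E$ with a nested sequence of Banach spaces $E=E_0\supset E_1\supset\cdots$ with compact inclusions $E_n\to E_m$ ($m<n$) and $E_\infty=\bigcap E_m$ dense in each $E_m$; $\|\cdot\|$ is the norm of $E=E_0$. An sc-isomorphism is a linear bijection $T:E\to F$ such that $T$ and $T^{-1}$ are bounded and map each level continuously onto the corresponding level. A partial quadrant in $E$ is a closed subset $C$ such that some sc-isomorphism $T:E\to\mathbb R^n\oplus Q$ ($Q$ an sc-Banach space) maps $C$ onto $[0,\infty)^n\oplus Q$; a partial quadrant in a finite-dimensional space $N$ is the image of $[0,\infty)^k\oplus\mathbb R^{d-k}$ under a linear isomorphism $\mathbb R^d\to N$. An sc-complement of a closed subspace $N$ is a closed subspace $N^\perp$ with $E_m=(N\cap E_m)\oplus(N^\perp\cap E_m)$ topologically for every $m$, both pieces being sc-subspaces. A closed linear subspace $N$ of $E$ is in good position to $C$ if $N\cap C$ has nonempty interior in $N$ and there exist an sc-complement $N^\perp$ of $N$ and a constant $c>0$ such that for every $(n,m)\in N\oplus N^\perp$ with $\|m\|\le c\|n\|$ one has: $n+m\in C$ if and only if $n\in C$. *)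

From HB Require Import structures.
From mathcomp Require Import all_boot all_order all_algebra.
From mathcomp Require Import all_classical all_reals all_analysis.
Set Implicit Arguments. Unset Strict Implicit. Unset Printing Implicit Defensive.
Import Order.TTheory GRing.Theory Num.Theory.
Import numFieldNormedType.Exports.
Local Open Scope classical_set_scope.
Local Open Scope ring_scope.

Section Defs.
Variable R : realType.

Definition lin_subspace (V : lmodType R) (F : set V) : Prop :=
  F 0 /\ forall (a : R) (x y : V), F x -> F y -> F (a *: x + y).

Definition is_linear (V W : lmodType R) (T : V -> W) : Prop :=
  forall (a : R) (x y : V), T (a *: x + y) = a *: T x + T y.

Definition norm_on (V : lmodType R) (F : set V) (nrm : V -> R) : Prop :=
  [/\ forall x, F x -> 0 <= nrm x,
      forall x, F x -> nrm x = 0 -> x = 0,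
      forall (a : R) x, F x -> nrm (a *: x) = `|a| * nrm x
    & forall x y, F x -> F y -> nrm (x + y) <= nrm x + nrm y].

Definition nrm_cvg (V : lmodType R) (nrm : V -> R) (u : nat -> V) (l : V) : Prop :=
  forall e : R, 0 < e -> exists K : nat, forall i, (K <= i)%N -> nrm (u i - l) < e.

Definition nrm_cauchy (V : lmodType R) (nrm : V -> R) (u : nat -> V) : Prop :=
  forall e : R, 0 < e -> exists K : nat,
    forall i j, (K <= i)%N -> (K <= j)%N -> nrm (u i - u j) < e.

Definition banach_on (V : lmodType R) (F : set V) (nrm : V -> R) : Prop :=
  [/\ lin_subspace F, norm_on F nrm &
      forall u : nat -> V, (forall i, F (u i)) -> nrm_cauchy nrm u ->
        exists l, F l /\ nrm_cvg nrm u l].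

(* Compactness of the inclusion is expressed sequentially (bounded sequences
   in E_n have a subsequence converging in E_m), which is the definition of a
   compact operator between Banach (metric) spaces. *)
Definition sc_filtration (V : lmodType R) (lev : nat -> set V)
    (nrm : nat -> V -> R) : Prop :=
  [/\ forall m, banach_on (lev m) (nrm m),
      forall m, lev m.+1 `<=` lev m,
      forall m n, (m < n)%N -> forall u : nat -> V,
        (forall i, lev n (u i)) -> (exists B : R, forall i, nrm n (u i) <= B) ->
        exists phi : nat -> nat, (forall i, (phi i < phi i.+1)%N) /\
          exists l, lev m l /\ nrm_cvg (nrm m) (u \o phi) l
    & forall m x, lev m x -> forall e : R, 0 < e ->
        exists y, (forall k, lev k y) /\ nrm m (x - y) < e].

Definition sc_structure (V : lmodType R) (lev : nat -> set V)
    (nrm : nat -> V -> R) : Prop :=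
  lev 0%N = setT /\ sc_filtration lev nrm.

Definition sc_Banach (E : completeNormedModType R) (lev : nat -> set E)
    (nrm : nat -> E -> R) : Prop :=
  sc_structure lev nrm /\ forall x : E, nrm 0%N x = `|x|.

Definition sc_iso (V W : lmodType R) (levV : nat -> set V) (nrmV : nat -> V -> R)
    (levW : nat -> set W) (nrmW : nat -> W -> R) (T : V -> W) : Prop :=
  [/\ is_linear T, bijective T,
      forall m x, levV m x <-> levW m (T x),
      forall m, exists c : R, forall x, levV m x -> nrmW m (T x) <= c * nrmV m x
    & forall m, exists c : R, forall x, levV m x -> nrmV m x <= c * nrmW m (T x)].

Definition prod_lev (n : nat) (Q : lmodType R) (levQ : nat -> set Q) :
    nat -> set ('rV[R]_n * Q)%type :=
  fun m => [set p | levQ m p.2].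

Definition prod_nrm (n : nat) (Q : lmodType R) (nrmQ : nat -> Q -> R) :
    nat -> ('rV[R]_n * Q)%type -> R :=
  fun m p => \sum_(i < n) `|p.1 ord0 i| + nrmQ m p.2.

Definition partial_quadrant (E : completeNormedModType R) (lev : nat -> set E)
    (nrm : nat -> E -> R) (C : set E) : Prop :=
  closed C /\
  exists (n : nat) (Q : lmodType R) (levQ : nat -> set Q) (nrmQ : nat -> Q -> R)
         (T : E -> ('rV[R]_n * Q)%type),
    [/\ sc_structure levQ nrmQ,
        sc_iso lev nrm (prod_lev (n:=n) levQ) (prod_nrm (n:=n) nrmQ) T
      & T @` C = [set p : ('rV[R]_n * Q)%type | forall i : 'I_n, 0 <= p.1 ord0 i]].

Definition findim_subspace (E : lmodType R) (N : set E) : Prop :=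
  lin_subspace N /\
  exists (d : nat) (f : 'rV[R]_d -> E), is_linear f /\ range f = N.

Definition findim_partial_quadrant (E : lmodType R) (N D : set E) : Prop :=
  exists (d k : nat) (L : 'rV[R]_d -> E),
    [/\ (k <= d)%N, is_linear L, injective L, range L = N
      & L @` [set v : 'rV[R]_d | forall i : 'I_d, (i < k)%N -> 0 <= v ord0 i] = D].

Definition sc_subspace (E : completeNormedModType R) (lev : nat -> set E)
    (nrm : nat -> E -> R) (F : set E) : Prop :=
  [/\ lin_subspace F, closed F & sc_filtration (fun m => F `&` lev m) nrm].

Definition sc_complement (E : completeNormedModType R) (lev : nat -> set E)
    (nrm : nat -> E -> R) (N P : set E) : Prop :=
  [/\ sc_subspace lev nrm N, sc_subspace lev nrm P &
      forall m,
      [/\ forall x, lev m x -> exists a b, [/\ N a, lev m a, P b, lev m b & x = a + b],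
          forall z, N z -> P z -> lev m z -> z = 0
        & exists c : R, forall a b, N a -> lev m a -> P b -> lev m b ->
            nrm m a <= c * nrm m (a + b)]].

Definition good_position (E : completeNormedModType R) (lev : nat -> set E)
    (nrm : nat -> E -> R) (N C : set E) : Prop :=
  [/\ lin_subspace N, closed N,
      (exists x, [/\ N x, C x & exists e : R, 0 < e /\
          forall y, N y -> `|y - x| < e -> C y])
    & exists (P : set E) (c : R), [/\ sc_complement lev nrm N P, 0 < c &
        forall n m, N n -> P m -> `|m| <= c * `|n| -> (C (n + m) <-> C n)]].

End Defs.

From HB Require Import structures.
From mathcomp Require Import all_boot all_order all_algebra.
From mathcomp Require Import all_classical all_reals all_analysis.
From mathcomp Require Import ring lra.
Set Implicit Arguments. Unset Strict Implicit. Unset Printing Implicit Defensive.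
Import Order.TTheory GRing.Theory Num.Theory.
Import numFieldNormedType.Exports.
Local Open Scope classical_set_scope.
Local Open Scope ring_scope.

(* Through the sc-isomorphism, C is the set where finitely many linear
   coordinates lam_i are nonnegative. Good position makes every coordinate that
   does not vanish on the complement P strictly positive on the nonzero points
   of C /\ N, while the coordinates vanishing on P have dual vectors in N
   (project coordinate vectors to N along P). Either C /\ N is cut out by the
   latter, hence a partial quadrant, or some point of N satisfies them and lies
   outside C; then every segment from C /\ N to that point leaves C through 0,
   so, by the interior point, N is a line and C /\ N a half-line. *)

Section LinearAlgebra.
Variable R : realType.

Section IsLinear.
Variables (V W : lmodType R) (f : V -> W).
Hypothesis fL : is_linear f.

Lemma is_linearD x y : f (x + y) = f x + f y.
Proof. by have := fL 1 x y; rewrite !scale1r. Qed.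

Lemma is_linear0 : f 0 = 0.
Proof. by apply: (addrI (f 0)); rewrite -is_linearD !addr0. Qed.

Lemma is_linearZ a x : f (a *: x) = a *: f x.
Proof. by rewrite -[a *: x]addr0 fL is_linear0 addr0. Qed.

Lemma is_linearB x y : f (x - y) = f x - f y.
Proof. by rewrite is_linearD -scaleN1r is_linearZ scaleN1r. Qed.

Lemma is_linear_sum k (F : 'I_k -> V) : f (\sum_(i < k) F i) = \sum_(i < k) f (F i).
Proof. exact: (big_morph f is_linearD is_linear0). Qed.

End IsLinear.

Lemma is_linear_comp (U V W : lmodType R) (f : U -> V) (g : V -> W) :
  is_linear f -> is_linear g -> is_linear (g \o f).
Proof. by move=> fL gL a x y /=; rewrite fL gL. Qed.

Section LinSubspace.
Variables (V : lmodType R) (N : set V).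
Hypothesis Ns : lin_subspace N.

Lemma lin_subspace0 : N 0. Proof. by case: Ns. Qed.

Lemma lin_subspaceD x y : N x -> N y -> N (x + y).
Proof. by case: Ns => _ NL Nx Ny; have := NL 1 x y Nx Ny; rewrite scale1r. Qed.

Lemma lin_subspaceZ a x : N x -> N (a *: x).
Proof. by case: Ns => N0 NL Nx; have := NL a x 0 Nx N0; rewrite addr0. Qed.

Lemma lin_subspaceB x y : N x -> N y -> N (x - y).
Proof. by move=> Nx Ny; rewrite -scaleN1r; apply: lin_subspaceD => //; apply: lin_subspaceZ. Qed.

Lemma lin_subspace_sum k (F : 'I_k -> V) : (forall j, N (F j)) -> N (\sum_(j < k) F j).
Proof. by move=> NF; apply: (big_ind N lin_subspace0 lin_subspaceD) => j _. Qed.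

End LinSubspace.

(* A kernel vector [v] with [v j != 0] lets every row be replaced by one with
   vanishing [j]-th entry, so [f] factors through one fewer coordinate. *)
Lemma linear_range_injective (V : lmodType R) d (f : 'rV[R]_d -> V) : is_linear f ->
  exists d' (h : 'rV[R]_d' -> V), [/\ is_linear h, injective h & range h = range f].
Proof.
elim: d f => [|d IH] f fL.
  by exists 0%N, f; split=> // u w _; rewrite [u]thinmx0 [w]thinmx0.
have [finj|] := pselect (injective f); first by exists d.+1, f.
move=> /existsNP [u /existsNP [w /not_implyP [fuw /eqP uw]]].
pose v := u - w.
have fv : f v = 0 by rewrite is_linearB // fuw subrr.
have [j vj] : exists j, v ord0 j != 0.
  apply: contrapT => /forallNP v0; move: uw; rewrite -subr_eq0 => /eqP; apply.
  by apply/rowP => j; rewrite [RHS]mxE; have := v0 j; case: eqP.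
pose ins (y : 'rV[R]_d) : 'rV[R]_d.+1 :=
  \row_k (if unlift j k is Some i then y ord0 i else 0).
have gL : is_linear (f \o ins).
  move=> a x y; rewrite /= -fL; congr f; apply/rowP=> k; rewrite !mxE.
  by case: unliftP => [i _|_]; rewrite ?mxE // mulr0 addr0.
have [d' [h [hL hinj hr]]] := IH _ gL.
exists d', h; split=> //; rewrite hr.
apply/seteqP; split=> x [y _ <-]; first by exists (ins y).
pose y' := y - (y ord0 j / v ord0 j) *: v.
exists (\row_i y' ord0 (lift j i)) => //=.
suff -> : ins (\row_i y' ord0 (lift j i)) = y'.
  by rewrite /y' is_linearB // is_linearZ // fv scaler0 subr0.
apply/rowP => k; rewrite !mxE; case: unliftP => [i ->|->]; rewrite ?mxE //.
by rewrite divfK ?subrr //; move: vj; rewrite /v !mxE.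
Qed.

Lemma dual_family_coord k (V : lmodType R) (mu : 'I_k -> V -> R) (a : 'I_k -> V) :
  (forall j, is_linear (mu j)) -> (forall i j, mu i (a j) = (i == j)%:R) ->
  forall i (t : 'I_k -> R), mu i (\sum_(j < k) t j *: a j) = t i.
Proof.
move=> muL mua i t.
have muZ j b x : mu j (b *: x) = b * mu j x := is_linearZ (muL j) b x.
rewrite is_linear_sum // (bigD1 i) //= muZ mua eqxx mulr1 big1 ?addr0 // => j ji.
by rewrite muZ mua eq_sym (negbTE ji) mulr0.
Qed.

Section DualFamily.
Variables (V : lmodType R) (N : set V) (k : nat).
Variables (mu : 'I_k -> V -> R) (a : 'I_k -> V).
Hypotheses (Nfin : findim_subspace N) (muL : forall j, is_linear (mu j)).
Hypotheses (Na : forall j, N (a j)) (mua : forall i j, mu i (a j) = (i == j)%:R).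

Let Ns : lin_subspace N := Nfin.1.

Let span_dual (t : 'I_k -> R) : N (\sum_(j < k) t j *: a j).
Proof. by apply: lin_subspace_sum => // j; apply: lin_subspaceZ. Qed.

(* [x - sum_j mu_j x a_j] projects [N] onto the common kernel of the [mu_j]. *)
Lemma dual_family_kernel_param : exists d (h : 'rV[R]_d -> V),
  [/\ is_linear h, injective h,
      forall w, N (h w) /\ forall j, mu j (h w) = 0 &
      forall x, N x -> exists w, h w = x - \sum_(j < k) mu j x *: a j].
Proof.
have [_ [d [f [fL fr]]]] := Nfin.
pose g x := x - \sum_(j < k) mu j x *: a j.
have gL : is_linear g.
  move=> b x y; rewrite /g.
  under eq_bigr => j _ do rewrite muL scalerDl -scalerA.
  by rewrite big_split -scaler_sumr /= scalerBr opprD addrACA.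
have [d' [h [hL hinj hr]]] := linear_range_injective (is_linear_comp fL gL).
exists d', h; split=> // [w|x].
  have [u _ <-] : range (g \o f) (h w) by rewrite -hr; exists w.
  split=> [|j]; last by rewrite is_linearB // dual_family_coord // subrr.
  by apply: lin_subspaceB => //; rewrite -fr; exists u.
rewrite -{1}fr => -[y _ <-].
have [w _ hw] : range h (g (f y)) by rewrite hr; exists y.
by exists w.
Qed.

Lemma dual_family_partial_quadrant :
  findim_partial_quadrant N [set x | N x /\ forall j, 0 <= mu j x].
Proof.
have [d [h [hL hinj hN hsurj]]] := dual_family_kernel_param.
have muA := dual_family_coord muL mua.
pose L (u : 'rV[R]_(k + d)) :=
  \sum_(j < k) u ord0 (lshift d j) *: a j + h (rsubmx u).
have muL' i u : mu i (L u) = u ord0 (lshift d i).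
  by rewrite is_linearD // muA (hN _).2 addr0.
have LN u : N (L u) by apply: lin_subspaceD => //; exact: (hN _).1.
have Lsurj x : N x -> exists u, L u = x /\ forall j, u ord0 (lshift d j) = mu j x.
  move=> Nx; have [w hw] := hsurj x Nx.
  exists (row_mx (\row_j mu j x) w); split=> [|j]; last by rewrite row_mxEl mxE.
  rewrite /L row_mxKr hw.
  under eq_bigr => j _ do rewrite row_mxEl mxE.
  by rewrite addrC subrK.
exists (k + d)%N, k, L; split.
- exact: leq_addr.
- move=> b u v; rewrite /L.
  have -> : rsubmx (b *: u + v) = b *: rsubmx u + rsubmx v.
    by apply/rowP => i; rewrite !mxE.
  rewrite hL; under eq_bigr => j _ do rewrite !mxE scalerDl -scalerA.
  by rewrite big_split -scaler_sumr /= scalerDr addrACA.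
- move=> u v Luv.
  have el : lsubmx u = lsubmx v by apply/rowP => i; rewrite !mxE -!muL' Luv.
  have er : rsubmx u = rsubmx v.
    apply: hinj; apply: (addrI (\sum_(j < k) u ord0 (lshift d j) *: a j)).
    rewrite [in RHS](eq_bigr (fun j => v ord0 (lshift d j) *: a j)) //.
    by move=> j _; have := congr1 (fun M : 'rV[R]_k => M ord0 j) el; rewrite !mxE => ->.
  by rewrite -[u]hsubmxK -[v]hsubmxK el er.
- apply/seteqP; split=> [x [u _ <-] //|x Nx].
  by have [u [<- _]] := Lsurj x Nx; exists u.
- apply/seteqP; split=> [x [u u0 <-]|x [Nx x0]].
    by split=> // j; rewrite muL'; apply: u0; rewrite /= ltn_ord.
  have [u [Lu uE]] := Lsurj x Nx; exists u => // i ik.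
  rewrite (_ : i = lshift d (Ordinal ik)) ?uE //; exact: val_inj.
Qed.

End DualFamily.

End LinearAlgebra.

Section Quadrant.
Variables (R : realType) (E : normedModType R).

Lemma interior_shift (N S : set E) (x0 v : E) (e : R) :
  lin_subspace N -> 0 < e -> (forall y, N y -> `|y - x0| < e -> S y) ->
  N x0 -> N v -> exists2 d : R, 0 < d & S (x0 + d *: v).
Proof.
move=> Ns e0 x0_int Nx0 Nv.
have v1 : 0 < `|v| + 1 by rewrite ltr_pwDr ?normr_ge0.
pose d := e / (2 * (`|v| + 1)).
have d0 : 0 < d by rewrite divr_gt0 // mulr_gt0.
exists d => //; apply: x0_int; first by apply: lin_subspaceD => //; apply: lin_subspaceZ.
rewrite addrAC subrr add0r normrZ gtr0_norm //.
have dv : d * (`|v| + 1) = e / 2 by rewrite /d; field; rewrite gt_eqF.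
by rewrite (@le_lt_trans _ _ (d * (`|v| + 1))) ?ler_pM2l ?lerDl //; lra.
Qed.

Variables (n : nat) (lam : 'I_n -> E -> R).
Hypothesis lamL : forall i, is_linear (lam i).

Definition quadrant : set E := [set x | forall i, 0 <= lam i x].

Let lamZ i b x : lam i (b *: x) = b * lam i x := is_linearZ (lamL i) b x.

Lemma quadrantZ s x : 0 <= s -> quadrant x -> quadrant (s *: x).
Proof. by move=> s0 Cx i; rewrite lamZ mulr_ge0. Qed.

Lemma quadrantZ_pos s x : 0 < s -> quadrant (s *: x) -> quadrant x.
Proof.
move=> s0 Csx; rewrite -[x](scalerK (lt0r_neq0 s0)).
by apply: quadrantZ; rewrite ?invr_ge0 ?ltW.
Qed.

Variables (N P : set E) (c : R).
Hypotheses (Ns : lin_subspace N) (Ps : lin_subspace P) (c0 : 0 < c).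
Hypothesis good : forall y m, N y -> P m -> `|m| <= c * `|y| ->
  quadrant (y + m) <-> quadrant y.

Let vanishes i := forall m, P m -> lam i m = 0.

(* A coordinate that does not vanish on [P] can be pushed below zero by a
   small perturbation in [P], which good position forbids unless [y = 0]. *)
Lemma quadrant_cap_face_eq0 j y :
  ~ vanishes j -> N y -> quadrant y -> lam j y = 0 -> y = 0.
Proof.
move=> /existsNP [m /not_implyP [Pm /eqP mj]] Ny Cy yj.
apply: contrapT => /eqP y0.
pose m2 := (- lam j m) *: m.
have m2j : lam j m2 < 0 by rewrite lamZ mulNr oppr_lt0 -expr2 exprn_even_gt0.
have m20 : m2 != 0 by apply: contraTneq m2j => ->; rewrite is_linear0 // ltxx.
pose t := c * `|y| / `|m2|.
have t0 : 0 < t by rewrite divr_gt0 ?mulr_gt0 ?normr_gt0.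
have tm2 : `|t *: m2| <= c * `|y| by rewrite normrZ gtr0_norm // divfK ?normr_eq0.
have /(_ j) := (good Ny (lin_subspaceZ Ps t (lin_subspaceZ Ps _ Pm)) tm2).2 Cy.
by rewrite is_linearD // yj add0r lamZ pmulr_rge0 // leNgt m2j.
Qed.

(* Walking from [x] towards [nn], the first coordinate to vanish does not
   vanish on [P]; the exit point is then [0], so [x] is a multiple of [nn]. *)
Lemma quadrant_cap_collinear x nn :
  N x -> quadrant x -> N nn -> (forall i, vanishes i -> 0 <= lam i nn) ->
  ~ quadrant nn -> exists s, x = s *: nn.
Proof.
move=> Nx Cx Nnn nn_van /existsNP [j0 /negP]; rewrite -ltNge => nnj0.
pose tt j := lam j x / (lam j x - lam j nn).
have gap j : lam j nn < 0 -> 0 < lam j x - lam j nn by have := Cx j; lra.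
have ttE j : lam j nn < 0 -> tt j * (lam j x - lam j nn) = lam j x.
  by move=> nnj; rewrite divfK // gt_eqF // gap.
case: (arg_minP tt (P := fun j => lam j nn < 0) nnj0) => js nnjs tt_min.
set ts := tt js in tt_min.
have tsE : ts * (lam js x - lam js nn) = lam js x := ttE js nnjs.
have ts0 : 0 <= ts by rewrite divr_ge0 // ltW // gap.
have ts1 : ts < 1 by have := gap js nnjs; nra.
pose p := (1 - ts) *: x + ts *: nn.
have pE i : lam i p = (1 - ts) * lam i x + ts * lam i nn.
  by rewrite is_linearD // !lamZ.
have Cp : quadrant p.
  move=> i; rewrite pE; have := Cx i; case: (ltP (lam i nn) 0) => nni xi.
    by have := tt_min i nni; have := ttE i nni; have := gap i nni; nra.
  nra.
have Np : N p by apply: (lin_subspaceD Ns); apply: (lin_subspaceZ Ns).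
have pjs : lam js p = 0 by rewrite pE; nra.
have js_van : ~ vanishes js by move=> /nn_van; rewrite leNgt nnjs.
have p0 := quadrant_cap_face_eq0 js_van Np Cp pjs.
have ts1' : 1 - ts != 0 by rewrite subr_eq0 gt_eqF.
exists (- (ts / (1 - ts))); apply: (scalerI ts1').
rewrite scalerA mulrN mulrC divfK // scaleNr.
by apply/eqP; rewrite -addr_eq0 -/p p0.
Qed.

Hypothesis dec : forall x, exists a b, [/\ N a, P b & x = a + b].
Hypothesis dual : forall j, exists e, forall i, lam i e = (i == j)%:R.

Lemma quadrant_cap_vanishing : findim_subspace N ->
  (forall x, N x -> (forall i, vanishes i -> 0 <= lam i x) -> quadrant x) ->
  findim_partial_quadrant N (quadrant `&` N).
Proof.
move=> Nfin van_quadrant.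
pose I0 := [set i | `[< vanishes i >]]%SET.
have I0P i : reflect (vanishes i) (i \in I0) by rewrite inE; apply: asboolP.
have dualN (j : 'I_#|I0|) : exists a,
    N a /\ forall i, vanishes i -> lam i a = (i == enum_val j)%:R.
  have [u uE] := dual (enum_val j); have [a [b [Na Pb ubE]]] := dec u.
  exists a; split=> // i ivan; rewrite -uE ubE is_linearD //.
  by rewrite (ivan b Pb) addr0.
have [a aE] := choice dualN.
have -> : quadrant `&` N =
    [set x | N x /\ forall j : 'I_#|I0|, 0 <= lam (enum_val j) x].
  apply/seteqP; split=> x; first by case=> Cx Nx; split.
  case=> Nx xI0; split=> //; apply: van_quadrant => // i /I0P iI0.
  by rewrite -(enum_rankK_in iI0 iI0); apply: xI0.
apply: dual_family_partial_quadrant => // [j|i j]; first exact: (aE j).1.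
by rewrite (aE j).2 ?(inj_eq enum_val_inj) //; apply/I0P/enum_valP.
Qed.

Variables (x0 : E) (e : R).
Hypotheses (Nx0 : N x0) (e0 : 0 < e).
Hypothesis x0_int : forall y, N y -> `|y - x0| < e -> quadrant y.

Let Cx0 : quadrant x0.
Proof. by apply: x0_int; rewrite // subrr normr0. Qed.

Lemma quadrant_cap_line nn : findim_subspace N ->
  N nn -> (forall i, vanishes i -> 0 <= lam i nn) -> ~ quadrant nn ->
  findim_partial_quadrant N (quadrant `&` N).
Proof.
move=> Nfin Nnn nn_van Cnn.
have collinear x : N x -> quadrant x -> exists s, x = s *: nn.
  by move=> Nx Cx; apply: quadrant_cap_collinear.
have nn_span a : N a -> exists t, a = t *: nn.
  move=> Na; have [d d0 Cd] := interior_shift Ns e0 x0_int Nx0 Na.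
  have [s0 x0E] := collinear x0 Nx0 Cx0.
  have [s1 x1E] := collinear _ (lin_subspaceD Ns Nx0 (lin_subspaceZ Ns d Na)) Cd.
  exists (d^-1 * (s1 - s0)); rewrite -scalerA scalerBl -x1E -x0E addrAC subrr add0r.
  by rewrite scalerA mulVf ?scale1r ?gt_eqF.
have [j0 /negP] := (existsNP _).2 Cnn; rewrite -ltNge => nnj0.
have nonpos t : quadrant (t *: nn) -> t <= 0.
  by move=> Ct; rewrite leNgt; apply/negP => t0; exact: Cnn (quadrantZ_pos t0 Ct).
have [tau tau0 Cw] : exists2 tau, tau < 0 & quadrant (tau *: nn).
  have [d d0 Cd] := interior_shift Ns e0 x0_int Nx0 (lin_subspaceZ Ns (-1) Nnn).
  have [s0 x0E] := collinear x0 Nx0 Cx0.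
  have s0le : s0 <= 0 by apply: nonpos; rewrite -x0E.
  exists (s0 - d); first lra.
  by rewrite scalerBl -x0E; move: Cd; rewrite scaleN1r scalerN.
have -> : quadrant `&` N = [set x | N x /\ forall j : 'I_1, 0 <= lam j0 x].
  apply/seteqP; split=> [x [Cx Nx] //|x [Nx xj0]]; split=> //.
  have [t xE] := nn_span x Nx.
  have := xj0 ord0; rewrite xE lamZ nmulr_lge0 // => t0.
  rewrite -[t](divfK (ltr0_neq0 tau0)) -scalerA.
  by apply: quadrantZ => //; apply: mulr_le0; rewrite // invr_le0 ltW.
apply: (@dual_family_partial_quadrant _ _ _ 1 (fun=> lam j0)
  (fun=> (lam j0 nn)^-1 *: nn)) => // [_|i j].
- exact: lin_subspaceZ.
- by rewrite lamZ mulVf ?ltr0_neq0 // (ord1 i) (ord1 j).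
Qed.

Lemma quadrant_cap_partial_quadrant : findim_subspace N ->
  findim_partial_quadrant N (quadrant `&` N).
Proof.
move=> Nfin.
have [|/existsNP [nn /not_implyP [Nnn /not_implyP [nn_van Cnn]]]] :=
  pselect (forall x, N x -> (forall i, vanishes i -> 0 <= lam i x) -> quadrant x).
  exact: quadrant_cap_vanishing.
exact: (quadrant_cap_line Nfin Nnn nn_van Cnn).
Qed.

End Quadrant.

Lemma partial_quadrant_coordinates (R : realType) (E : completeNormedModType R)
    (lev : nat -> set E) (nrm : nat -> E -> R) (C : set E) :
  partial_quadrant lev nrm C -> exists n (lam : 'I_n -> E -> R),
    [/\ forall i, is_linear (lam i), C = quadrant lam &
        forall j, exists e, forall i, lam i e = (i == j)%:R].
Proof.
move=> [_ [n [Q [levQ [nrmQ [T [_ [TL [S TK SK] _ _ _] TC]]]]]]].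
exists n, (fun i x => (T x).1 ord0 i); split.
- by move=> i a x y; rewrite TL /= !mxE.
- apply/seteqP; split=> x Cx.
    have : (T @` C) (T x) by exists x.
    by rewrite TC; exact.
  have : (T @` C) (T x) by rewrite TC.
  by case=> y Cy /(can_inj TK) <-.
- by move=> j; exists (S (delta_mx 0 j, 0)) => i; rewrite SK /= mxE eqxx.
Qed.

Theorem proposition6p1 (R : realType) (E : completeNormedModType R)
    (lev : nat -> set E) (nrm : nat -> E -> R) (C N : set E) :
  sc_Banach lev nrm ->
  partial_quadrant lev nrm C ->
  findim_subspace N ->
  good_position lev nrm N C ->
  findim_partial_quadrant N (C `&` N).
Proof.
move=> [[lev0 _] _] /partial_quadrant_coordinates [n [lam [lamL -> dual]]] Nfin.
move=> [Ns _ [x0 [Nx0 _ [e [e0 x0_int]]]] [P [c [[_ [Ps _ _] compl] c0 good]]]].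
have dec x : exists a b, [/\ N a, P b & x = a + b].
  have [+ _ _] := compl 0%N; rewrite lev0 => /(_ x I) [a [b [Na _ Pb _ ->]]].
  by exists a, b.
exact: (quadrant_cap_partial_quadrant lamL Ns Ps c0 good dec dual Nx0 e0 x0_int).
Qed.
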